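(* Let $\mathcal{M}$ be a finite structure with unary predicates $A_u, A_v, A_w, \mathrm{FHalf}, \mathrm{SHalf}$ and a binary predicate $\mathrm{Mult}$ such that: the sets $A_u^{\mathcal{M}}, A_v^{\mathcal{M}}, A_w^{\mathcal{M}}$ are pairwise disjoint; $\mathrm{FHalf}^{\mathcal{M}}$ and $\mathrm{SHalf}^{\mathcal{M}}$ partition $M$ and $|\mathrm{FHalf}^{\mathcal{M}}|=\frac12|M|$; $A_u^{\mathcal{M}}\cup A_v^{\mathcal{M}}\subseteq\mathrm{FHalf}^{\mathcal{M}}$; $A_w^{\mathcal{M}}\subseteq\mathrm{SHalf}^{\mathcal{M}}$. Suppose $\mathcal{M}$ satisfies the conjunction of $$\forall y\,\big(A_w(y)\to\exists x\,\mathrm{Mult}(x,y)\big)\wedge\forall x\forall y\,\big(\mathrm{Mult}(x,y)\to(A_u(x)\wedge A_w(y))\big),$$ $$\forall x\,\big(A_u(x)\to\exists^{=50\%}y\,([\mathrm{SHalf}(y)\wedge\neg\mathrm{Mult}(x,y)]\vee A_v(y))\big),$$ $$\forall x\,\big(A_w(x)\to\exists^{=50\%}y\,([\mathrm{SHalf}(y)\wedge x\neq y]\vee\mathrm{Mult}(y,x))\big).$$ Then $|A_u^{\mathcal{M}}|\cdot|A_v^{\mathcal{M}}| = |A_w^{\mathcal{M}}|$.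
   Context: Structures are finite, over relational signatures with unary and binary relation symbols and equality. Global percentage quantifier: for a rational $0\le q\le 100$, $\mathcal{M}\models \exists^{=q\%}y\,\varphi(y)$ (possibly with other free variables fixed) iff the number of elements $b\in M$ with $\mathcal{M}\models\varphi(b)$ equals $\frac{q}{100}\cdot|M|$. *)

From mathcomp Require Import all_boot all_order all_algebra.
Set Implicit Arguments. Unset Strict Implicit. Unset Printing Implicit Defensive.
Import GRing.Theory Num.Theory.
Local Open Scope ring_scope.

(* Global percentage quantifier over a finite structure with universe T:
   exists^{=q%} y, P y  iff  #{y | P y} = (q/100) * |T|. *)
Definition exists_pct (T : finType) (q : rat) (P : pred T) : Prop :=
  (#|[set y | P y]|%:R : rat) = q / 100 * (#|T|%:R).

From mathcomp Require Import all_boot all_order all_algebra.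
From mathcomp Require Import lra zify.
Set Implicit Arguments. Unset Strict Implicit. Unset Printing Implicit Defensive.
Import GRing.Theory Num.Theory.
Local Open Scope ring_scope.

(* Proof idea: a double count of the edges of the bipartite relation Mult,
   which by the first axiom only joins Au to Aw.
   - Since FHalf and SHalf are complementary halves, a 50% quantifier just
     says that the defining set has exactly #|SHalf| elements.
   - For x in Au, the set counted by the second axiom is the disjoint union
     of SHalf minus the Mult-successors of x (which lie in Aw, inside SHalf)
     and Av (inside FHalf); hence x has exactly #|Av| successors.
   - For w in Aw, the set counted by the third axiom is the disjoint union
     of SHalf minus w and the Mult-predecessors of w (which lie in Au, inside
     FHalf); hence w has exactly one predecessor. *)

Section Counting.
Variable T : finType.

Lemma complement_half_card (F S : {set T}) :
  [disjoint F & S] -> F :|: S = [set: T] ->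
  (#|F|%:R : rat) = 1 / 2 * #|T|%:R -> #|S| = #|F|.
Proof.
move=> disFS coverFS halfF.
have cardT : #|T| = (#|F| + #|S|)%N.
  by rewrite -cardsT -coverFS cardsU (disjoint_setI0 disFS) cards0 subn0.
have : (#|T|%:R : rat) = (#|F| + #|F|)%:R by rewrite natrD halfF; lra.
by rewrite cardT => /eqP; rewrite eqr_nat => /eqP; lia.
Qed.

Lemma exists_pct_card (q : rat) (S : {set T}) (P : pred T) :
  (#|S|%:R : rat) = q / 100 * #|T|%:R ->
  exists_pct q P -> #|[set y | P y]| = #|S|.
Proof. by move=> cardS; rewrite /exists_pct -cardS => /eqP; rewrite eqr_nat => /eqP. Qed.

Lemma cardsU_disjoint (A B : {set T}) :
  [disjoint A & B] -> #|A :|: B| = (#|A| + #|B|)%N.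
Proof. by move=> disAB; rewrite cardsU (disjoint_setI0 disAB) cards0 subn0. Qed.

Lemma sum_supported_const (A : {set T}) (f : T -> nat) (d : nat) :
  (forall x, x \in A -> f x = d) -> (forall x, x \notin A -> f x = 0%N) ->
  (\sum_x f x = #|A| * d)%N.
Proof.
move=> fA f0; rewrite -sum_nat_const [RHS]big_mkcond /=.
by apply: eq_bigr => x _; case: ifPn => [/fA | /f0].
Qed.

Lemma double_count (A B : {set T}) (R : rel T) (d e : nat) :
  (forall x y, R x y -> x \in A /\ y \in B) ->
  (forall x, x \in A -> #|[set y | R x y]| = d) ->
  (forall y, y \in B -> #|[set x | R x y]| = e) ->
  (#|A| * d = #|B| * e)%N.
Proof.
move=> RAB outdeg indeg.
have row x : (\sum_y (R x y : nat) = #|[set y | R x y]|)%N.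
  by rewrite -sum1_card [RHS]big_mkcond /=; apply: eq_bigr => y _; rewrite inE.
have col y : (\sum_x (R x y : nat) = #|[set x | R x y]|)%N.
  by rewrite -sum1_card [RHS]big_mkcond /=; apply: eq_bigr => x _; rewrite inE.
have rows : (\sum_x \sum_y (R x y : nat) = #|A| * d)%N.
  apply: sum_supported_const => x xA; first by rewrite row outdeg.
  apply: big1 => y _; case Rxy: (R x y) => //.
  by have [] := RAB _ _ Rxy; rewrite (negbTE xA).
have cols : (\sum_y \sum_x (R x y : nat) = #|B| * e)%N.
  apply: sum_supported_const => y yB; first by rewrite col indeg.
  apply: big1 => x _; case Rxy: (R x y) => //.
  by have [] := RAB _ _ Rxy; rewrite (negbTE yB).
by rewrite -rows -cols exchange_big.
Qed.

End Counting.

Section Structure.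
Variable T : finType.
Variables (Au Av Aw FHalf SHalf : {set T}) (Mult : rel T).
Hypothesis part_disj : [disjoint FHalf & SHalf].
Hypothesis sub_uv : Au :|: Av \subset FHalf.
Hypothesis sub_w : Aw \subset SHalf.
Hypothesis mult_bipartite : forall x y, Mult x y -> x \in Au /\ y \in Aw.

Lemma Au_FHalf : Au \subset FHalf.
Proof. exact: subset_trans (subsetUl Au Av) sub_uv. Qed.

Lemma Av_FHalf : Av \subset FHalf.
Proof. exact: subset_trans (subsetUr Au Av) sub_uv. Qed.

Lemma out_degree (x : T) :
  #|[set y | (y \in SHalf) && ~~ Mult x y || (y \in Av)]| = #|SHalf| ->
  #|[set y | Mult x y]| = #|Av|.
Proof.
have succ_SHalf : [set y | Mult x y] \subset SHalf.
  by apply/subsetP => y; rewrite inE => /mult_bipartite [_ /(subsetP sub_w)].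
have -> : [set y | (y \in SHalf) && ~~ Mult x y || (y \in Av)] =
          (SHalf :\: [set y | Mult x y]) :|: Av.
  by apply/setP => y; rewrite !inE andbC.
rewrite cardsU_disjoint ?cardsDS //; last first.
  by rewrite disjoint_sym (disjointWl Av_FHalf) // (disjointWr (subsetDl _ _)).
by have := subset_leq_card succ_SHalf; lia.
Qed.

Lemma in_degree (w : T) : w \in Aw ->
  #|[set y | (y \in SHalf) && (w != y) || Mult y w]| = #|SHalf| ->
  #|[set y | Mult y w]| = 1%N.
Proof.
move=> ww.
have -> : [set y | (y \in SHalf) && (w != y) || Mult y w] =
          (SHalf :\ w) :|: [set y | Mult y w].
  by apply/setP => y; rewrite !inE [y == w]eq_sym andbC.
rewrite cardsU_disjoint; last first.
  have pred_Au : [set y | Mult y w] \subset Au.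
    by apply/subsetP => y; rewrite inE => /mult_bipartite [].
  by rewrite disjoint_sym (disjointWl (subset_trans pred_Au Au_FHalf)) //
             (disjointWr (subsetDl _ _)).
by rewrite (cardsD1 w SHalf) (subsetP sub_w w ww) /=; lia.
Qed.

End Structure.

Theorem mainTheorem4 (T : finType)
  (Au Av Aw FHalf SHalf : {set T}) (Mult : rel T)
  (dis_uv : [disjoint Au & Av]) (dis_uw : [disjoint Au & Aw])
  (dis_vw : [disjoint Av & Aw])
  (part_disj : [disjoint FHalf & SHalf]) (part_cover : FHalf :|: SHalf = [set: T])
  (half : (#|FHalf|%:R : rat) = 1 / 2 * #|T|%:R)
  (sub_uv : Au :|: Av \subset FHalf) (sub_w : Aw \subset SHalf)
  (ax1a : forall y, y \in Aw -> exists x, Mult x y)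
  (ax1b : forall x y, Mult x y -> x \in Au /\ y \in Aw)
  (ax2 : forall x, x \in Au ->
     exists_pct 50 (fun y => ((y \in SHalf) && ~~ Mult x y) || (y \in Av)))
  (ax3 : forall x, x \in Aw ->
     exists_pct 50 (fun y => ((y \in SHalf) && (x != y)) || Mult y x)) :
  (#|Au| * #|Av| = #|Aw|)%N.
Proof.
(* SHalf has
   exactly 50% of the universe, so each 50% quantifier counts to #|SHalf|. *)
have SHalf_pct : (#|SHalf|%:R : rat) = 50 / 100 * #|T|%:R.
  by rewrite (complement_half_card part_disj part_cover half) half; lra.
have outdeg x : x \in Au -> #|[set y | Mult x y]| = #|Av|.
  move=> xu; exact: out_degree part_disj sub_uv sub_w ax1b _
                      (exists_pct_card SHalf_pct (ax2 x xu)).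
have indeg w : w \in Aw -> #|[set y | Mult y w]| = 1%N.
  move=> ww; exact: in_degree part_disj sub_uv sub_w ax1b _ ww
                      (exists_pct_card SHalf_pct (ax3 w ww)).
by rewrite (double_count ax1b outdeg indeg) muln1.
Qed.
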